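(* Let $J'=(z_w,z_w')$ be a nonempty open interval, let $r:J'\to\mathbb{R}$ be differentiable and non-increasing, and let $h:J'\to\mathbb{R}$ be differentiable with $\dot h(z)=1+h(z)^2-2r(z)h(z)$ on $J'$, having exactly one zero $z_*\in J'$. Consider Newton's iteration $z_{n+1}=N(z_n)$ with $N(z)=z-\dfrac{h(z)}{1+h(z)^2-2r(z)h(z)}$. (1) If $r(z)>0$ for all $z\in(z_w,z_* )$, then for every $z_0\in(z_w,z_* )$ the iterates are well defined and $(z_n)$ increases monotonically to $z_*$. (2) If $r(z)<0$ for all $z\in(z_*,z_w')$, then for every $z_0\in(z_*,z_w')$ the iterates are well defined and $(z_n)$ decreases monotonically to $z_*$.
   Context: $\dot{}$ denotes differentiation with respect to $z$. Here $h<0$ on $(z_w,z_* )$ and $h>0$ on $(z_*,z_w')$. *)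

From Stdlib Require Import Reals.
From Coquelicot Require Import Coquelicot.
Open Scope R_scope.

Definition in_oint (a b : Rbar) (z : R) : Prop := Rbar_lt a z /\ Rbar_lt z b.

Definition newton_den (r h : R -> R) (z : R) : R := 1 + (h z)^2 - 2 * r z * h z.

Definition newton_map (r h : R -> R) (z : R) : R := z - h z / newton_den r h z.

Fixpoint newton_iter (r h : R -> R) (z0 : R) (n : nat) : R :=
  match n with
  | O => z0
  | S m => newton_map r h (newton_iter r h z0 m)
  end.

(* Left of the zero [zs] we have [h < 0 < r], so the denominator
   [D = 1 + h^2 - 2 r h] is at least 1 and each Newton step [-h/D] is nonnegative.
   There [h' = D > 0], hence [|h|] decreases and, with [r] nonincreasing, so does
   [D]; thus [w |-> D(z) w - h(w)] is nondecreasing on [[z, zs]], which gives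
   [N(z) <= zs].  The iterates increase and stay below [zs]; as long as they stay
   below [c < zs] each step is at least [-h(c)/D(z0) > 0], so they converge to [zs].
   Part (2) is part (1) for the reflected data [z |-> -r(-z), -h(-z)]. *)

From Stdlib Require Import Reals Lra Psatz Classical.
From Coquelicot Require Import Coquelicot.
Open Scope R_scope.

Lemma continuity_pt_is_derive (f : R -> R) (x l : R) :
  is_derive f x l -> continuity_pt f x.
Proof.
  intros Hf. apply is_derive_Reals in Hf.
  exact (derivable_continuous_pt f x (exist _ l Hf)).
Qed.

Lemma is_derive_nonneg_le (f df : R -> R) (a b : R) :
  a <= b ->
  (forall x, a <= x <= b -> is_derive f x (df x)) ->
  (forall x, a <= x <= b -> 0 <= df x) ->
  f a <= f b.
Proof.
  intros Hab Hd Hpos.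
  destruct (MVT_gen f a b df) as [c [Hc Hmvt]].
  - intros x Hx. apply Hd. rewrite Rmin_left, Rmax_right in Hx; lra.
  - intros x Hx. apply (continuity_pt_is_derive f x (df x)), Hd.
    rewrite Rmin_left, Rmax_right in Hx; lra.
  - rewrite Rmin_left, Rmax_right in Hc by lra.
    pose proof (Hpos c Hc). nra.
Qed.

Lemma is_derive_pos_lt_left (f : R -> R) (x l a : R) :
  is_derive f x l -> 0 < l -> a < x -> exists y, a < y < x /\ f y < f x.
Proof.
  intros Hf Hl Hax. apply is_derive_Reals in Hf.
  destruct (Hf (l / 2) ltac:(lra)) as [delta Hdelta].
  pose proof (cond_pos delta) as Hdpos.
  set (k := Rmax (- (delta / 2)) ((a - x) / 2)).
  assert (Hk : - (delta / 2) <= k /\ (a - x) / 2 <= k /\ k < 0).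
  { repeat split; [apply Rmax_l | apply Rmax_r | apply Rmax_lub_lt; lra]. }
  exists (x + k). split; [lra |].
  specialize (Hdelta k ltac:(lra) ltac:(rewrite Rabs_left; lra)).
  apply Rabs_def2 in Hdelta.
  assert (Hq : f (x + k) - f x = (f (x + k) - f x) / k * k) by (field; lra).
  nra.
Qed.

Lemma is_lim_seq_uniform_step (u : nat -> R) (l : R) :
  (forall n, u n <= u (S n)) -> (forall n, u n <= l) ->
  (forall c, c < l -> exists d, 0 < d /\ forall n, u n <= c -> u n + d <= u (S n)) ->
  is_lim_seq u l.
Proof.
  intros Hinc Hbnd Hstep.
  assert (Hmono : forall m n, (m <= n)%nat -> u m <= u n).
  { intros m n Hmn. induction Hmn as [| n _ IH]; [lra |].
    pose proof (Hinc n). lra. }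
  apply is_lim_seq_spec. intros eps. simpl.
  pose proof (cond_pos eps) as Heps.
  assert (Hreach : exists N, l - eps < u N).
  { apply NNPP. intros Hnot.
    assert (Hbelow : forall n, u n <= l - eps).
    { intros n. apply Rnot_lt_le. intros Hn. apply Hnot. exists n. exact Hn. }
    destruct (Hstep (l - eps) ltac:(lra)) as [d [Hd Hsd]].
    assert (Hlin : forall n, u O + INR n * d <= u n).
    { induction n as [| n IH]; [simpl; lra |].
      rewrite S_INR. pose proof (Hsd n (Hbelow n)). lra. }
    destruct (INR_archimed d (l - u O) Hd) as [n Hn].
    pose proof (Hlin n). pose proof (Hbnd n). lra. }
  destruct Hreach as [N HN]. exists N. intros n Hn.
  pose proof (Hmono N n Hn). pose proof (Hbnd n).
  rewrite Rabs_left1; lra.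
Qed.

Definition in_ocint (a : Rbar) (b z : R) : Prop := Rbar_lt a z /\ z <= b.

Lemma in_oint_between (a b : Rbar) (x y t : R) :
  in_oint a b x -> in_oint a b y -> x <= t <= y -> in_oint a b t.
Proof. unfold in_oint. destruct a, b; simpl; intros; lra. Qed.

Lemma in_ocint_between (a : Rbar) (b x y t : R) :
  in_ocint a b x -> in_ocint a b y -> x <= t <= y -> in_ocint a b t.
Proof. unfold in_ocint. destruct a; simpl; intros; lra. Qed.

Lemma in_oint_of_ocint (a b : Rbar) (c z : R) :
  in_oint a b c -> in_ocint a c z -> in_oint a b z.
Proof. unfold in_oint, in_ocint. destruct b; simpl; intros; intuition lra. Qed.

Section LeftBranch.

Variables (zw zw' : Rbar) (r h : R -> R) (zs : R).
Hypothesis r_noninc :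
  forall x y, in_oint zw zw' x -> in_oint zw zw' y -> x <= y -> r y <= r x.
Hypothesis h_ode :
  forall z, in_oint zw zw' z -> is_derive h z (1 + (h z)^2 - 2 * r z * h z).
Hypothesis zs_in : in_oint zw zw' zs.
Hypothesis h_zs : h zs = 0.
Hypothesis h_zero_unique : forall z, in_oint zw zw' z -> h z = 0 -> z = zs.

(* [h'(zs) = 1 > 0], so [h < 0] just left of [zs]; a positive value further left
   would produce a second zero by the intermediate value theorem. *)
Lemma h_neg_left (z : R) : in_oint zw zw' z -> z < zs -> h z < 0.
Proof.
  intros Hz Hzzs.
  assert (Hder : is_derive h zs 1).
  { pose proof (h_ode zs zs_in) as E. rewrite h_zs in E.
    replace 1 with (1 + 0 ^ 2 - 2 * r zs * 0) by ring. exact E. }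
  destruct (is_derive_pos_lt_left h zs 1 z Hder ltac:(lra) Hzzs) as [y [Hy Hhy]].
  rewrite h_zs in Hhy.
  assert (Hyin : in_oint zw zw' y) by (apply (in_oint_between _ _ z zs); auto; lra).
  destruct (Rtotal_order (h z) 0) as [Hneg | [Hzero | Hpos]]; [exact Hneg | |].
  - apply h_zero_unique in Hzero; [lra | exact Hz].
  - exfalso.
    destruct (Ranalysis5.IVT_interv (fun t => - h t) z y) as [t [Ht Hht]];
      [| lra | lra | lra |].
    + intros t Ht. apply (continuity_pt_is_derive _ t (- (1 + (h t)^2 - 2 * r t * h t))).
      apply (is_derive_opp h), h_ode.
      apply (in_oint_between _ _ z y); auto.
    + assert (Htin : in_oint zw zw' t) by (apply (in_oint_between _ _ z y); auto).
      pose proof (h_zero_unique t Htin ltac:(lra)). lra.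
Qed.

Hypothesis r_pos_left : forall z : R, Rbar_lt zw z -> z < zs -> 0 < r z.

Let D := newton_den r h.

Lemma in_left_oint (z : R) : in_ocint zw zs z -> in_oint zw zw' z.
Proof. exact (in_oint_of_ocint zw zw' zs z zs_in). Qed.

Lemma zs_in_left : in_ocint zw zs zs.
Proof. split; [apply zs_in | lra]. Qed.

Lemma h_nonpos_left (z : R) : in_ocint zw zs z -> h z <= 0.
Proof.
  intros Hz. destruct (Req_dec z zs) as [-> | Hne]; [rewrite h_zs; lra |].
  left. apply h_neg_left; [apply in_left_oint, Hz | destruct Hz; lra].
Qed.

Lemma newton_den_ge1_left (z : R) : in_ocint zw zs z -> 1 <= D z.
Proof.
  intros Hz. pose proof (h_nonpos_left z Hz) as Hh.
  unfold D, newton_den. destruct (Req_dec z zs) as [-> | Hne].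
  - rewrite h_zs. lra.
  - destruct Hz as [Hz Hzs].
    pose proof (r_pos_left z Hz ltac:(destruct Hzs; [assumption | contradiction])).
    nra.
Qed.

Lemma h_le_left (x y : R) :
  in_ocint zw zs x -> in_ocint zw zs y -> x <= y -> h x <= h y.
Proof.
  intros Hx Hy Hxy. apply (is_derive_nonneg_le h D x y Hxy); intros t Ht.
  - apply h_ode, in_left_oint, (in_ocint_between _ _ x y); auto.
  - pose proof (newton_den_ge1_left t (in_ocint_between _ _ x y t Hx Hy Ht)). lra.
Qed.

(* On the left branch [D = 1 + h^2 + 2 r |h|] with [|h|] and [r >= 0] nonincreasing. *)
Lemma newton_den_antitone_left (x y : R) :
  in_ocint zw zs x -> in_ocint zw zs y -> x <= y -> D y <= D x.
Proof.
  intros Hx Hy Hxy. destruct (Req_dec y zs) as [-> | Hne].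
  - pose proof (newton_den_ge1_left x Hx).
    unfold D, newton_den in *. rewrite h_zs. lra.
  - pose proof (h_le_left x y Hx Hy Hxy).
    pose proof (h_nonpos_left y Hy).
    pose proof (r_noninc x y (in_left_oint x Hx) (in_left_oint y Hy) Hxy).
    destruct Hy as [Hy Hyzs].
    pose proof (r_pos_left y Hy ltac:(destruct Hyzs; [assumption | contradiction])).
    unfold D, newton_den. nra.
Qed.

(* [N z <= zs] because [w |-> D z * w - h w] is nondecreasing on [[z, zs]]. *)
Lemma newton_map_left (z : R) :
  in_ocint zw zs z -> z <= newton_map r h z <= zs.
Proof.
  intros Hz. pose proof (newton_den_ge1_left z Hz) as HD.
  pose proof (h_nonpos_left z Hz) as Hh.
  assert (Hinv : 0 < / D z) by (apply Rinv_0_lt_compat; lra).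
  assert (Hmono : D z * z - h z <= D z * zs - h zs).
  { apply (is_derive_nonneg_le (fun w => D z * w - h w) (fun w => D z * 1 - D w));
      [destruct Hz; lra | |]; intros t Ht;
      assert (Htin : in_ocint zw zs t)
        by (apply (in_ocint_between _ _ z zs); auto using zs_in_left).
    - apply (is_derive_minus (fun w => D z * w) h t (D z * 1) (D t)).
      + apply is_derive_scal, (@is_derive_id R_AbsRing).
      + apply h_ode, in_left_oint, Htin.
    - pose proof (newton_den_antitone_left z t Hz Htin ltac:(lra)). lra. }
  rewrite h_zs in Hmono.
  assert (D z * / D z = 1) by (apply Rinv_r; lra).
  unfold newton_map, Rdiv. fold D. split; nra.
Qed.

Lemma newton_step_lower_bound (z0 z c : R) :
  in_ocint zw zs z0 -> z0 <= z <= c -> c < zs ->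
  - h c / D z0 <= newton_map r h z - z.
Proof.
  intros Hz0 Hz Hc.
  assert (Hcin : in_ocint zw zs c)
    by (apply (in_ocint_between _ _ z0 zs); auto using zs_in_left; lra).
  assert (Hzin : in_ocint zw zs z) by (apply (in_ocint_between _ _ z0 c); auto; lra).
  pose proof (h_le_left z c Hzin Hcin ltac:(lra)).
  pose proof (h_nonpos_left c Hcin).
  pose proof (newton_den_ge1_left z0 Hz0).
  pose proof (newton_den_ge1_left z Hzin).
  pose proof (newton_den_antitone_left z0 z Hz0 Hzin ltac:(lra)).
  unfold newton_map, Rdiv. fold D.
  apply Rle_trans with (- h z * / D z0).
  { apply Rmult_le_compat_r; [left; apply Rinv_0_lt_compat |]; lra. }
  replace (z - h z * / D z - z) with (- h z * / D z) by ring.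
  apply Rmult_le_compat_l; [lra |]. apply Rinv_le_contravar; lra.
Qed.

Lemma newton_converges_left (z0 : R) :
  Rbar_lt zw z0 -> z0 < zs ->
  (forall n, in_oint zw zw' (newton_iter r h z0 n)
             /\ newton_den r h (newton_iter r h z0 n) <> 0) /\
  (forall n, newton_iter r h z0 n <= newton_iter r h z0 (S n)) /\
  is_lim_seq (newton_iter r h z0) zs.
Proof.
  intros Hz0 Hz0zs. set (u := newton_iter r h z0).
  assert (Hz0in : in_ocint zw zs z0) by (split; [exact Hz0 | lra]).
  assert (Hu : forall n, in_ocint zw zs (u n)).
  { induction n as [| n IH]; [exact Hz0in |].
    pose proof (newton_map_left (u n) IH).
    apply (in_ocint_between _ _ (u n) zs); auto using zs_in_left; lra. }
  assert (Hinc : forall n, u n <= u (S n))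
    by (intros n; apply (newton_map_left (u n) (Hu n))).
  assert (Hge : forall n, z0 <= u n).
  { induction n as [| n IH]; [unfold u; simpl; lra |]. pose proof (Hinc n). lra. }
  split; [| split; [exact Hinc |]].
  - intros n. split; [apply in_left_oint, Hu |].
    apply Rgt_not_eq. pose proof (newton_den_ge1_left (u n) (Hu n)). unfold D in *. lra.
  - apply is_lim_seq_uniform_step; [exact Hinc | intros n; apply (Hu n) |].
    intros c Hc. set (c' := Rmax z0 c).
    assert (Hc' : z0 <= c' /\ c <= c' /\ c' < zs).
    { repeat split; [apply Rmax_l | apply Rmax_r | apply Rmax_lub_lt; lra]. }
    exists (- h c' / D z0). split.
    + assert (Hc'in : in_ocint zw zs c')
        by (apply (in_ocint_between _ _ z0 zs); auto using zs_in_left; lra).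
      pose proof (h_neg_left c' (in_left_oint c' Hc'in) ltac:(lra)).
      pose proof (newton_den_ge1_left z0 Hz0in).
      apply Rdiv_lt_0_compat; lra.
    + intros n Hn. pose proof (newton_step_lower_bound z0 (u n) c' Hz0in
        ltac:(split; [apply Hge | lra]) ltac:(lra)).
      change (u (S n)) with (newton_map r h (u n)). lra.
Qed.

End LeftBranch.

Definition mirror (f : R -> R) (z : R) : R := - f (- z).

Lemma Rbar_lt_opp_l (a : Rbar) (x : R) : Rbar_lt (Rbar_opp a) x <-> Rbar_lt (- x) a.
Proof. destruct a; simpl; intuition lra. Qed.

Lemma Rbar_lt_opp_r (a : Rbar) (x : R) : Rbar_lt x (Rbar_opp a) <-> Rbar_lt a (- x).
Proof. destruct a; simpl; intuition lra. Qed.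

Lemma in_oint_mirror (a b : Rbar) (x : R) :
  in_oint (Rbar_opp b) (Rbar_opp a) x <-> in_oint a b (- x).
Proof. unfold in_oint. rewrite Rbar_lt_opp_l, Rbar_lt_opp_r. tauto. Qed.

Lemma is_derive_mirror (f : R -> R) (x l : R) :
  is_derive f (- x) l -> is_derive (mirror f) x l.
Proof.
  intros Hf. unfold mirror.
  pose proof (is_derive_comp f Ropp x l (-1) Hf) as Hc.
  replace l with (- ((-1) * l)) by ring.
  apply (is_derive_opp (fun z => f (- z))).
  apply Hc. apply (is_derive_opp (fun t => t) x 1), (@is_derive_id R_AbsRing).
Qed.

Lemma newton_den_mirror (r h : R -> R) (x : R) :
  newton_den (mirror r) (mirror h) x = newton_den r h (- x).
Proof. unfold newton_den, mirror. ring. Qed.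

Lemma newton_iter_mirror (r h : R -> R) (z0 : R) (n : nat) :
  newton_iter (mirror r) (mirror h) (- z0) n = - newton_iter r h z0 n.
Proof.
  induction n as [| n IH]; simpl; [reflexivity |].
  rewrite IH. unfold newton_map. rewrite newton_den_mirror.
  unfold mirror. rewrite Ropp_involutive. unfold Rdiv. ring.
Qed.

Lemma newton_converges_right (zw zw' : Rbar) (r h : R -> R) (zs : R) :
  (forall x y, in_oint zw zw' x -> in_oint zw zw' y -> x <= y -> r y <= r x) ->
  (forall z, in_oint zw zw' z -> is_derive h z (1 + (h z)^2 - 2 * r z * h z)) ->
  in_oint zw zw' zs -> h zs = 0 ->
  (forall z, in_oint zw zw' z -> h z = 0 -> z = zs) ->
  (forall z : R, zs < z -> Rbar_lt z zw' -> r z < 0) ->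
  forall z0 : R, zs < z0 -> Rbar_lt z0 zw' ->
    (forall n, in_oint zw zw' (newton_iter r h z0 n)
               /\ newton_den r h (newton_iter r h z0 n) <> 0) /\
    (forall n, newton_iter r h z0 (S n) <= newton_iter r h z0 n) /\
    is_lim_seq (newton_iter r h z0) zs.
Proof.
  intros Hr Hode Hzs Hhzs Huniq Hneg z0 Hz0 Hz0w.
  assert (Hr' : forall x y, in_oint (Rbar_opp zw') (Rbar_opp zw) x ->
            in_oint (Rbar_opp zw') (Rbar_opp zw) y -> x <= y -> mirror r y <= mirror r x).
  { intros x y Hx Hy Hxy. apply in_oint_mirror in Hx, Hy.
    pose proof (Hr (- y) (- x) Hy Hx ltac:(lra)). unfold mirror. lra. }
  assert (Hode' : forall z, in_oint (Rbar_opp zw') (Rbar_opp zw) z ->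
            is_derive (mirror h) z (1 + mirror h z ^ 2 - 2 * mirror r z * mirror h z)).
  { intros z Hz. apply in_oint_mirror in Hz.
    replace (1 + mirror h z ^ 2 - 2 * mirror r z * mirror h z)
      with (1 + h (- z) ^ 2 - 2 * r (- z) * h (- z)) by (unfold mirror; ring).
    apply is_derive_mirror, Hode, Hz. }
  assert (Hzs' : in_oint (Rbar_opp zw') (Rbar_opp zw) (- zs)).
  { apply in_oint_mirror. rewrite Ropp_involutive. exact Hzs. }
  assert (Hhzs' : mirror h (- zs) = 0).
  { unfold mirror. rewrite Ropp_involutive, Hhzs. ring. }
  assert (Huniq' : forall z, in_oint (Rbar_opp zw') (Rbar_opp zw) z ->
            mirror h z = 0 -> z = - zs).
  { intros z Hz Hhz. apply in_oint_mirror in Hz. unfold mirror in Hhz.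
    pose proof (Huniq (- z) Hz ltac:(lra)). lra. }
  assert (Hpos' : forall z : R, Rbar_lt (Rbar_opp zw') z -> z < - zs -> 0 < mirror r z).
  { intros z Hz Hzzs. apply Rbar_lt_opp_l in Hz.
    pose proof (Hneg (- z) ltac:(lra) Hz). unfold mirror. lra. }
  assert (Hz0' : Rbar_lt (Rbar_opp zw') (- z0)).
  { apply Rbar_lt_opp_l. rewrite Ropp_involutive. exact Hz0w. }
  destruct (newton_converges_left _ _ _ _ _ Hr' Hode' Hzs' Hhzs' Huniq' Hpos' (- z0) Hz0'
              ltac:(lra)) as [Hin [Hinc Hlim]].
  split; [| split].
  - intros n. destruct (Hin n) as [Hn Hd].
    rewrite newton_iter_mirror, in_oint_mirror, Ropp_involutive in Hn.
    rewrite newton_iter_mirror, newton_den_mirror, Ropp_involutive in Hd.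
    split; assumption.
  - intros n. pose proof (Hinc n) as Hn. rewrite !newton_iter_mirror in Hn. lra.
  - apply is_lim_seq_opp in Hlim. simpl in Hlim. rewrite Ropp_involutive in Hlim.
    revert Hlim. apply is_lim_seq_ext. intros n.
    rewrite newton_iter_mirror. apply Ropp_involutive.
Qed.

Theorem theorem3p8 (zw zw' : Rbar) (r h : R -> R) (zs : R) :
  Rbar_lt zw zw' ->
  (forall z, in_oint zw zw' z -> ex_derive r z) ->
  (forall x y, in_oint zw zw' x -> in_oint zw zw' y -> x <= y -> r y <= r x) ->
  (forall z, in_oint zw zw' z -> is_derive h z (1 + (h z)^2 - 2 * r z * h z)) ->
  in_oint zw zw' zs -> h zs = 0 ->
  (forall z, in_oint zw zw' z -> h z = 0 -> z = zs) ->
  ((forall z : R, Rbar_lt zw z -> z < zs -> 0 < r z) ->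
   forall z0 : R, Rbar_lt zw z0 -> z0 < zs ->
     (forall n, in_oint zw zw' (newton_iter r h z0 n)
                /\ newton_den r h (newton_iter r h z0 n) <> 0) /\
     (forall n, newton_iter r h z0 n <= newton_iter r h z0 (S n)) /\
     is_lim_seq (newton_iter r h z0) zs)
  /\
  ((forall z : R, zs < z -> Rbar_lt z zw' -> r z < 0) ->
   forall z0 : R, zs < z0 -> Rbar_lt z0 zw' ->
     (forall n, in_oint zw zw' (newton_iter r h z0 n)
                /\ newton_den r h (newton_iter r h z0 n) <> 0) /\
     (forall n, newton_iter r h z0 (S n) <= newton_iter r h z0 n) /\
     is_lim_seq (newton_iter r h z0) zs).
Proof.
  intros _ _ Hr Hode Hzs Hhzs Huniq. split.
  - exact (newton_converges_left zw zw' r h zs Hr Hode Hzs Hhzs Huniq).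
  - exact (newton_converges_right zw zw' r h zs Hr Hode Hzs Hhzs Huniq).
Qed.
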